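(* Let $J(P,Q)=\frac{D(P\|Q)+D(Q\|P)}{2}$ denote Jeffreys' divergence, with $P,Q$ ranging over pairs of probability distributions on a common countable set. Then (i) for every $\varepsilon\in[0,1)$, $\displaystyle\min_{P,Q:\ d_{\mathrm{TV}}(P,Q)=\varepsilon} J(P,Q)=\varepsilon\log\frac{1+\varepsilon}{1-\varepsilon}$, and this minimum is achieved by $P=\left(\frac{1-\varepsilon}{2},\frac{1+\varepsilon}{2}\right)$, $Q=\left(\frac{1+\varepsilon}{2},\frac{1-\varepsilon}{2}\right)$; (ii) for every $\varepsilon>0$, $\displaystyle\inf_{P,Q:\ D(P\|Q)=\varepsilon} J(P,Q)=\frac{\varepsilon}{2}$; (iii) the corresponding suprema, $\sup_{P,Q:\ d_{\mathrm{TV}}(P,Q)=\varepsilon}J(P,Q)$ for $\varepsilon\in(0,1)$ and $\sup_{P,Q:\ D(P\|Q)=\varepsilon}J(P,Q)$ for $\varepsilon>0$, are both $+\infty$.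
   Context: $d_{\mathrm{TV}}(P,Q)=\frac12\sum_x |P(x)-Q(x)|$; $D(P\|Q)=\sum_x P(x)\log\frac{P(x)}{Q(x)}$ is the relative entropy (possibly $+\infty$). Logarithms are natural. *)

From Stdlib Require Import Reals Lra Classical ClassicalEpsilon.
Open Scope R_scope.

Inductive ER : Type := Fin : R -> ER | PInf : ER.

Definition ER_le (x : R) (y : ER) : Prop :=
  match y with Fin b => x <= b | PInf => True end.
Definition ER_lt (x : R) (y : ER) : Prop :=
  match y with Fin b => x < b | PInf => True end.

(* Probability distributions on the countable set nat. *)
Definition is_prob (P : nat -> R) : Prop :=
  (forall x, 0 <= P x) /\ infinite_sum P 1.

(* Sum of a series over nat (in the order of nat): Some l if the partial
   sums converge to l, None otherwise. *)
Definition series (u : nat -> R) : option R :=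
  match excluded_middle_informative (exists l, infinite_sum u l) with
  | left H => Some (proj1_sig (constructive_indefinite_description _ H))
  | right _ => None
  end.

Definition dTV (P Q : nat -> R) : ER :=
  match series (fun x => Rabs (P x - Q x)) with
  | Some s => Fin (s / 2)
  | None => PInf
  end.

Definition kl_term (p q : R) : R :=
  if Req_EM_T p 0 then 0 else p * ln (p / q).

(* Relative entropy D(P||Q) (natural log), possibly +infinity:
   +infinity if P x > 0 = Q x for some x (p log(p/0) = +infinity),
   otherwise the sum of the series (+infinity if it does not converge). *)
Definition KL (P Q : nat -> R) : ER :=
  match excluded_middle_informative (exists x, 0 < P x /\ Q x = 0) with
  | left _ => PInf
  | right _ =>
      match series (fun x => kl_term (P x) (Q x)) with
      | Some l => Fin l
      | None => PInf
      end
  end.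

Definition Jeffreys (P Q : nat -> R) : ER :=
  match KL P Q, KL Q P with
  | Fin a, Fin b => Fin ((a + b) / 2)
  | _, _ => PInf
  end.

(* The two-point distributions of part (i), embedded in nat (support {0,1}). *)
Definition P_eps (eps : R) (n : nat) : R :=
  match n with 0%nat => (1 - eps) / 2 | 1%nat => (1 + eps) / 2 | _ => 0 end.
Definition Q_eps (eps : R) (n : nat) : R :=
  match n with 0%nat => (1 + eps) / 2 | 1%nat => (1 - eps) / 2 | _ => 0 end.

(* The map (p, q) |-> (p - q) ln (p / q), whose sum over the support is 2 J(P, Q),
   is convex and positively homogeneous, so it lies above each of its tangent
   planes at (r, 1).  Symmetrising in p and q turns such a plane into
   a |p - q| - b (p + q); summing over the support gives J >= a eps - b, and the
   choice r = (1 + eps) / (1 - eps) yields eps ln ((1 + eps) / (1 - eps)), attained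
   by the two-point pair of part (i).  Part (ii) rests on D(Q||P) >= 0, and its
   near-optimal pairs are two-point pairs (1 - a, a), (1 - b, b) with b tuned by
   the intermediate value theorem so that D(P||Q) = eps, while D(Q||P) <= -ln (1 - a)
   is small.  For (iii) a point charged by Q but not by P makes D(Q||P) infinite. *)

From Stdlib Require Import Reals Lra Lia ClassicalEpsilon.
Open Scope R_scope.

Lemma infinite_sum_of_series u l : series u = Some l -> infinite_sum u l.
Proof.
  unfold series; destruct (excluded_middle_informative _) as [H|H]; intro E;
    [|discriminate].
  injection E as <-; exact (proj2_sig (constructive_indefinite_description _ H)).
Qed.

Lemma series_of_infinite_sum u l : infinite_sum u l -> series u = Some l.
Proof.
  intro H; unfold series; destruct (excluded_middle_informative _) as [H'|H'].
  - f_equal; apply (uniqueness_sum u); [|exact H].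
    exact (proj2_sig (constructive_indefinite_description _ H')).
  - exfalso; apply H'; eauto.
Qed.

Lemma infinite_sum_plus u v a b : infinite_sum u a -> infinite_sum v b ->
  infinite_sum (fun n => u n + v n) (a + b).
Proof.
  intros Hu Hv e He.
  destruct (CV_plus (sum_f_R0 u) (sum_f_R0 v) a b Hu Hv e He) as [N HN].
  exists N; intros n Hn; rewrite sum_plus; auto.
Qed.

Lemma infinite_sum_scal u a c : infinite_sum u a ->
  infinite_sum (fun n => c * u n) (c * a).
Proof.
  intros Hu e He.
  assert (Hc : Un_cv (fun _ => c) c).
  { intros e' He'; exists 0%nat; intros; unfold Rdist.
    rewrite Rminus_diag, Rabs_R0; lra. }
  destruct (CV_mult (fun _ => c) (sum_f_R0 u) c a Hc Hu e He) as [N HN].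
  exists N; intros n Hn.
  replace (sum_f_R0 (fun i => c * u i) n) with (c * sum_f_R0 u n); auto.
  rewrite scal_sum; apply sum_eq; intros; ring.
Qed.

Lemma infinite_sum_le u v a b : infinite_sum u a -> infinite_sum v b ->
  (forall n, u n <= v n) -> a <= b.
Proof.
  intros Hu Hv H; apply (Rle_cv_lim (Un := sum_f_R0 u) (Vn := sum_f_R0 v)); auto.
  intro n; apply sum_Rle; auto.
Qed.

Lemma infinite_sum_finite_support u N : (forall n, (N < n)%nat -> u n = 0) ->
  infinite_sum u (sum_f_R0 u N).
Proof.
  intros H0 e He; exists N; intros n Hn.
  assert (Htail : forall k, sum_f_R0 u (N + k) = sum_f_R0 u N).
  { induction k as [|k IH]; [now rewrite Nat.add_0_r|].
    rewrite Nat.add_succ_r; simpl; rewrite IH, H0; [ring|lia]. }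
  replace n with (N + (n - N))%nat by lia; rewrite Htail; unfold Rdist.
  rewrite Rminus_diag, Rabs_R0; lra.
Qed.

Lemma ln_le_sub_1 y : 0 < y -> ln y <= y - 1.
Proof. intro Hy; pose proof (exp_ineq1_le (ln y)); rewrite exp_ln in *; lra. Qed.

Lemma ln_le x y : 0 < x -> x <= y -> ln x <= ln y.
Proof. intros Hx [Hxy|<-]; [left; apply ln_increasing|right]; auto. Qed.

Lemma ln_div x y : 0 < x -> 0 < y -> ln (x / y) = ln x - ln y.
Proof.
  intros; unfold Rdiv; rewrite ln_mult, ln_Rinv; try lra.
  now apply Rinv_0_lt_compat.
Qed.

Lemma exp_opp_in_01 x : 0 < x -> 0 < exp (- x) < 1.
Proof. intro; split; [apply exp_pos|]; rewrite <- exp_0; apply exp_increasing; lra. Qed.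

Lemma ln_div_swap x y : 0 < x -> 0 < y -> ln (y / x) = - ln (x / y).
Proof. intros; rewrite !ln_div; lra. Qed.

Lemma kl_term_pos_r p q : 0 < q -> kl_term p q = p * ln (p / q).
Proof. intro; unfold kl_term; destruct (Req_EM_T p 0); [subst; ring|auto]. Qed.

Lemma kl_term_ge_sub p q : 0 <= p -> 0 <= q -> ~ (0 < p /\ q = 0) ->
  p - q <= kl_term p q.
Proof.
  intros Hp Hq Hn; unfold kl_term; destruct (Req_EM_T p 0) as [E|E]; [lra|].
  assert (Hp' : 0 < p) by lra.
  assert (Hq' : 0 < q) by (destruct Hq; auto; exfalso; auto).
  pose proof (ln_le_sub_1 (q / p) ltac:(apply Rdiv_lt_0_compat; auto)) as Hln.
  rewrite ln_div_swap in Hln by auto.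
  assert (Hm : p * - ln (p / q) <= p * (q / p - 1)) by (apply Rmult_le_compat_l; lra).
  replace (p * (q / p - 1)) with (q - p) in Hm by (field; lra); lra.
Qed.

Lemma kl_term_add_swap p q : 0 < p -> 0 < q ->
  kl_term p q + kl_term q p = (p - q) * ln (p / q).
Proof. intros; rewrite !kl_term_pos_r, ln_div_swap by auto; ring. Qed.

(* The tangent plane at (r, 1) of the homogeneous convex map
   (p, q) |-> (p - q) ln (p / q), written in the basis (p - q, p + q). *)
Lemma tangent_le_sym_kl r p q : 0 < r -> 0 < p -> 0 < q ->
  (ln r + (r - / r) / 2) * (p - q) - (r - 1) ^ 2 / (2 * r) * (p + q)
  <= (p - q) * ln (p / q).
Proof.
  intros Hr Hp Hq.
  set (w := ln (p / (q * r))).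
  assert (Hx : 0 < p / (q * r)) by (apply Rdiv_lt_0_compat; nra).
  assert (E : ln (p / q) = w + ln r).
  { unfold w; rewrite <- ln_mult by auto; f_equal; field; lra. }
  assert (Hup : w <= p / (q * r) - 1) by (apply ln_le_sub_1; auto).
  assert (Hlow : 1 - q * r / p <= w).
  { unfold w; rewrite ln_div_swap by nra.
    pose proof (ln_le_sub_1 (q * r / p) ltac:(apply Rdiv_lt_0_compat; nra)); lra. }
  assert (Hp' : p * (1 - q * r / p) <= p * w) by (apply Rmult_le_compat_l; lra).
  assert (Hq' : q * w <= q * (p / (q * r) - 1)) by (apply Rmult_le_compat_l; lra).
  replace (p * (1 - q * r / p)) with (p - q * r) in Hp' by (field; lra).
  replace (q * (p / (q * r) - 1)) with (p / r - q) in Hq' by (field; lra).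
  replace ((ln r + (r - / r) / 2) * (p - q) - (r - 1) ^ 2 / (2 * r) * (p + q))
    with ((ln r + 1 - / r) * p + (- ln r + 1 - r) * q) by (field; lra).
  rewrite E; unfold Rdiv in *; nra.
Qed.

Lemma tangent_abs_le_sym_kl r p q : 0 < r -> 0 < p -> 0 < q ->
  (ln r + (r - / r) / 2) * Rabs (p - q) - (r - 1) ^ 2 / (2 * r) * (p + q)
  <= (p - q) * ln (p / q).
Proof.
  intros Hr Hp Hq; destruct (Rle_or_lt q p).
  - rewrite Rabs_right by lra; now apply tangent_le_sym_kl.
  - rewrite Rabs_left by lra.
    pose proof (tangent_le_sym_kl r q p Hr Hq Hp).
    rewrite (ln_div_swap p q) in H0 by auto.
    replace (- (p - q)) with (q - p) by ring; replace (p + q) with (q + p) by ring; lra.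
Qed.

Lemma tangent_abs_le_kl_term_add r p q : 0 < r -> 0 <= p -> 0 <= q ->
  ~ (0 < p /\ q = 0) -> ~ (0 < q /\ p = 0) ->
  (ln r + (r - / r) / 2) * Rabs (p - q) - (r - 1) ^ 2 / (2 * r) * (p + q)
  <= kl_term p q + kl_term q p.
Proof.
  intros Hr [Hp|<-] Hq Npq Nqp.
  - assert (0 < q) by (destruct Hq; auto; exfalso; auto).
    rewrite kl_term_add_swap by auto; now apply tangent_abs_le_sym_kl.
  - assert (q = 0) by (destruct Hq; auto; exfalso; auto); subst q.
    unfold kl_term; destruct (Req_EM_T 0 0); [|lra].
    rewrite Rminus_diag, Rabs_R0; lra.
Qed.

Lemma KL_Fin_inv P Q a : KL P Q = Fin a ->
  (~ exists x, 0 < P x /\ Q x = 0) /\ infinite_sum (fun x => kl_term (P x) (Q x)) a.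
Proof.
  unfold KL; destruct (excluded_middle_informative _) as [_|Hn]; [discriminate|].
  destruct (series _) eqn:Es; [|discriminate]; intro E; injection E as <-.
  split; auto; now apply infinite_sum_of_series.
Qed.

Lemma KL_PInf P Q x : 0 < P x -> Q x = 0 -> KL P Q = PInf.
Proof.
  intros; unfold KL; destruct (excluded_middle_informative _) as [_|Hn]; auto.
  exfalso; apply Hn; eauto.
Qed.

Lemma KL_ge0 P Q a : is_prob P -> is_prob Q -> KL P Q = Fin a -> 0 <= a.
Proof.
  intros [HP0 HP1] [HQ0 HQ1] H; apply KL_Fin_inv in H as [Hn Hs].
  assert (Hd : infinite_sum (fun x => P x + -1 * Q x) (1 + -1 * 1)).
  { apply infinite_sum_plus; auto; now apply infinite_sum_scal. }
  enough (1 + -1 * 1 <= a) by lra.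
  apply (infinite_sum_le _ _ _ _ Hd Hs); intro n.
  pose proof (kl_term_ge_sub (P n) (Q n) (HP0 n) (HQ0 n)).
  assert (~ (0 < P n /\ Q n = 0)) by (intro; apply Hn; eauto); intuition lra.
Qed.

Lemma ER_le_Jeffreys x P Q :
  (forall a b, KL P Q = Fin a -> KL Q P = Fin b -> x <= (a + b) / 2) ->
  ER_le x (Jeffreys P Q).
Proof.
  unfold Jeffreys; destruct (KL P Q), (KL Q P); simpl; auto.
Qed.

Lemma dTV_Fin_inv P Q d : dTV P Q = Fin d ->
  infinite_sum (fun x => Rabs (P x - Q x)) (2 * d).
Proof.
  unfold dTV; destruct (series _) eqn:Es; [|discriminate]; intro E; injection E as <-.
  replace (2 * (r / 2)) with r by field; now apply infinite_sum_of_series.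
Qed.

Lemma Jeffreys_ge_tangent_dTV r P Q d : 0 < r -> is_prob P -> is_prob Q ->
  dTV P Q = Fin d ->
  ER_le ((ln r + (r - / r) / 2) * d - (r - 1) ^ 2 / (2 * r)) (Jeffreys P Q).
Proof.
  intros Hr [HP0 HP1] [HQ0 HQ1] Hd; apply dTV_Fin_inv in Hd.
  apply ER_le_Jeffreys; intros a b E1 E2.
  apply KL_Fin_inv in E1 as [N1 S1]; apply KL_Fin_inv in E2 as [N2 S2].
  set (alpha := ln r + (r - / r) / 2); set (beta := (r - 1) ^ 2 / (2 * r)).
  assert (Hl : infinite_sum (fun x => alpha * Rabs (P x - Q x) + -beta * (P x + Q x))
                 (alpha * (2 * d) + -beta * (1 + 1))).
  { apply infinite_sum_plus; apply infinite_sum_scal; auto.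
    now apply infinite_sum_plus. }
  enough (alpha * (2 * d) + -beta * (1 + 1) <= a + b) by lra.
  apply (infinite_sum_le _ _ _ _ Hl (infinite_sum_plus _ _ _ _ S1 S2)); intro x.
  pose proof (tangent_abs_le_kl_term_add r (P x) (Q x) Hr (HP0 x) (HQ0 x)).
  assert (~ (0 < P x /\ Q x = 0)) by (intro; apply N1; eauto).
  assert (~ (0 < Q x /\ P x = 0)) by (intro; apply N2; eauto).
  unfold alpha, beta; intuition lra.
Qed.

Definition two (a b : R) (n : nat) : R :=
  match n with 0%nat => a | 1%nat => b | _ => 0 end.

Lemma infinite_sum_two u : (forall n, (1 < n)%nat -> u n = 0) ->
  infinite_sum u (u 0%nat + u 1%nat).
Proof. intro H; exact (infinite_sum_finite_support u 1 H). Qed.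

Lemma is_prob_two a b : 0 <= a -> 0 <= b -> a + b = 1 -> is_prob (two a b).
Proof.
  intros; split; [intros [|[|n]]; simpl; lra|].
  replace 1 with (two a b 0 + two a b 1) by (simpl; lra).
  apply infinite_sum_two; now intros [|[|n]] Hn; try lia.
Qed.

Lemma dTV_two a b c d :
  dTV (two a b) (two c d) = Fin ((Rabs (a - c) + Rabs (b - d)) / 2).
Proof.
  unfold dTV; rewrite (series_of_infinite_sum _ (Rabs (a - c) + Rabs (b - d))); auto.
  apply (infinite_sum_two (fun x => Rabs (two a b x - two c d x))).
  intros [|[|n]] Hn; try lia; simpl; now rewrite Rminus_diag, Rabs_R0.
Qed.

Lemma KL_two a b c d : 0 < c -> 0 < d ->
  KL (two a b) (two c d) = Fin (a * ln (a / c) + b * ln (b / d)).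
Proof.
  intros; unfold KL; destruct (excluded_middle_informative _) as [[x Hx]|_].
  { destruct x as [|[|x]]; simpl in Hx; lra. }
  rewrite (series_of_infinite_sum _ (a * ln (a / c) + b * ln (b / d))); auto.
  rewrite <- (kl_term_pos_r a c), <- (kl_term_pos_r b d) by auto.
  apply (infinite_sum_two (fun x => kl_term (two a b x) (two c d x))).
  intros [|[|n]] Hn; try lia; simpl; unfold kl_term.
  now destruct (Req_EM_T 0 0).
Qed.

Lemma Jeffreys_two a b c d : 0 < a -> 0 < b -> 0 < c -> 0 < d ->
  Jeffreys (two a b) (two c d)
  = Fin (((a - c) * ln (a / c) + (b - d) * ln (b / d)) / 2).
Proof.
  intros; unfold Jeffreys; rewrite !KL_two by auto; f_equal.
  rewrite (ln_div_swap a c), (ln_div_swap b d) by auto; field.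
Qed.

Lemma Jeffreys_two_PInf x : 0 < x -> Jeffreys (two 1 0) (two (1 - x) x) = PInf.
Proof.
  intro; unfold Jeffreys; destruct (KL (two 1 0) _); auto.
  now rewrite (KL_PInf _ _ 1%nat).
Qed.

Lemma exists_two_KL_eq a eps : 0 < a < 1 -> 0 < eps ->
  exists b, 0 < b <= a /\ KL (two (1 - a) a) (two (1 - b) b) = Fin eps.
Proof.
  intros Ha He.
  set (G := fun k => (1 - a) * ln ((1 - a) / (1 - a * exp (- k))) + a * k).
  assert (Hexp : forall k, 0 <= k -> 0 < exp (- k) <= 1).
  { intros k [Hk|<-]; [pose proof (exp_opp_in_01 k Hk); lra|].
    rewrite Ropp_0, exp_0; lra. }
  assert (Hla : ln (1 - a) < 0) by (rewrite <- ln_1; apply ln_increasing; lra).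
  set (K := (eps + 1 - ln (1 - a)) / a).
  assert (HK : 0 < K) by (unfold K; apply Rdiv_lt_0_compat; lra).
  destruct (Ranalysis5.IVT_interv (fun k => G k - eps) 0 K) as [k [Hk HGk]]; auto.
  - intros x Hx; pose proof (Hexp x (proj1 Hx)); unfold G; reg; [nra|].
    apply derivable_continuous_pt; exists (/ ((1 - a) / (1 - a * exp (- x)))).
    apply derivable_pt_lim_ln, Rdiv_lt_0_compat; nra.
  - unfold G; rewrite Ropp_0, exp_0, Rmult_1_r, Rdiv_diag, ln_1 by lra; lra.
  - unfold G; pose proof (Hexp K (Rlt_le _ _ HK)).
    assert (Hln : ln (1 - a) <= ln ((1 - a) / (1 - a * exp (- K)))).
    { apply ln_le; [lra|]; apply (Rmult_le_reg_r (1 - a * exp (- K))); [nra|].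
      unfold Rdiv; rewrite Rmult_assoc, Rinv_l, Rmult_1_r by nra.
      assert (0 < a * exp (- K)) by (apply Rmult_lt_0_compat; lra); nra. }
    assert (a * K = eps + 1 - ln (1 - a)) by (unfold K; field; lra).
    assert (0 <= (1 - a) * (ln ((1 - a) / (1 - a * exp (- K))) - ln (1 - a)))
      by (apply Rmult_le_pos; lra).
    nra.
  - pose proof (Hexp k (proj1 Hk)).
    exists (a * exp (- k)); split; [split; nra|].
    rewrite KL_two by nra; f_equal.
    replace (a / (a * exp (- k))) with (/ exp (- k)) by (field; lra).
    rewrite ln_Rinv, ln_exp by lra; unfold G in HGk; lra.
Qed.

Lemma KL_two_rev_le a b : 0 < b <= a -> a < 1 ->
  exists c, KL (two (1 - b) b) (two (1 - a) a) = Fin c /\ c <= - ln (1 - a).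
Proof.
  intros Hb Ha; rewrite KL_two by lra; eexists; split; [reflexivity|].
  assert (Hba : b * ln (b / a) <= 0).
  { assert (ln (b / a) <= 0); [|nra].
    rewrite <- ln_1; apply ln_le; [apply Rdiv_lt_0_compat; lra|].
    apply (Rmult_le_reg_r a); [lra|]; unfold Rdiv; rewrite Rmult_assoc, Rinv_l; lra. }
  assert (Hl : 0 <= ln ((1 - b) / (1 - a))).
  { rewrite <- ln_1; apply ln_le; [lra|].
    apply (Rmult_le_reg_r (1 - a)); [lra|]; unfold Rdiv.
    rewrite Rmult_assoc, Rinv_l; lra. }
  assert (ln ((1 - b) / (1 - a)) <= - ln (1 - a)).
  { rewrite ln_div by lra; pose proof (ln_le (1 - b) 1 ltac:(lra) ltac:(lra)).
    rewrite ln_1 in *; lra. }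
  nra.
Qed.

Lemma Jeffreys_ge_dTV eps P Q : 0 <= eps < 1 -> is_prob P -> is_prob Q ->
  dTV P Q = Fin eps -> ER_le (eps * ln ((1 + eps) / (1 - eps))) (Jeffreys P Q).
Proof.
  intros He HP HQ Hd.
  assert (Hr : 0 < (1 + eps) / (1 - eps)) by (apply Rdiv_lt_0_compat; lra).
  pose proof (Jeffreys_ge_tangent_dTV _ P Q eps Hr HP HQ Hd) as H.
  set (L := ln ((1 + eps) / (1 - eps))) in *.
  replace (eps * L) with ((L + ((1 + eps) / (1 - eps) - / ((1 + eps) / (1 - eps))) / 2)
     * eps - ((1 + eps) / (1 - eps) - 1) ^ 2 / (2 * ((1 + eps) / (1 - eps))));
    [exact H|field; lra].
Qed.

Lemma Jeffreys_P_eps_Q_eps eps : 0 <= eps < 1 ->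
  Jeffreys (P_eps eps) (Q_eps eps) = Fin (eps * ln ((1 + eps) / (1 - eps))).
Proof.
  intro He; change (Jeffreys (two ((1 - eps) / 2) ((1 + eps) / 2))
                             (two ((1 + eps) / 2) ((1 - eps) / 2))
               = Fin (eps * ln ((1 + eps) / (1 - eps)))).
  rewrite Jeffreys_two by lra; f_equal.
  rewrite (ln_div_swap ((1 + eps) / 2)) by lra.
  replace (((1 + eps) / 2) / ((1 - eps) / 2)) with ((1 + eps) / (1 - eps))
    by (field; lra); field.
Qed.

Lemma dTV_P_eps_Q_eps eps : 0 <= eps -> dTV (P_eps eps) (Q_eps eps) = Fin eps.
Proof.
  intro He; change (dTV (two ((1 - eps) / 2) ((1 + eps) / 2))
                        (two ((1 + eps) / 2) ((1 - eps) / 2)) = Fin eps).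
  rewrite dTV_two; f_equal.
  replace ((1 - eps) / 2 - (1 + eps) / 2) with (- eps) by field.
  replace ((1 + eps) / 2 - (1 - eps) / 2) with eps by field.
  rewrite Rabs_Ropp, Rabs_right by lra; field.
Qed.

Lemma Jeffreys_ge_half_KL eps P Q : is_prob P -> is_prob Q -> KL P Q = Fin eps ->
  ER_le (eps / 2) (Jeffreys P Q).
Proof.
  intros HP HQ H; apply ER_le_Jeffreys; intros a b E1 E2.
  rewrite H in E1; injection E1 as <-; pose proof (KL_ge0 Q P b HQ HP E2); lra.
Qed.

Lemma Jeffreys_near_half_KL eps delta : 0 < eps -> 0 < delta ->
  exists P Q : nat -> R, is_prob P /\ is_prob Q /\ KL P Q = Fin eps /\
    exists j : R, Jeffreys P Q = Fin j /\ j < eps / 2 + delta.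
Proof.
  intros He Hd; set (a := 1 - exp (- delta)).
  pose proof (exp_opp_in_01 delta Hd) as Hexp.
  assert (Hla : - ln (1 - a) = delta).
  { unfold a; replace (1 - (1 - exp (- delta))) with (exp (- delta)) by ring.
    rewrite ln_exp; ring. }
  destruct (exists_two_KL_eq a eps) as [b [Hb HKL]]; [unfold a; lra|auto|].
  exists (two (1 - a) a), (two (1 - b) b).
  split; [apply is_prob_two; unfold a in *; lra|].
  split; [apply is_prob_two; unfold a in *; lra|].
  split; [exact HKL|].
  destruct (KL_two_rev_le a b Hb) as [c [Hc Hcle]]; [unfold a; lra|].
  unfold Jeffreys; rewrite HKL, Hc; eexists; split; [reflexivity|lra].
Qed.

Lemma Jeffreys_unbounded_dTV eps M : 0 < eps < 1 ->
  exists P Q : nat -> R, is_prob P /\ is_prob Q /\ dTV P Q = Fin eps /\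
    ER_lt M (Jeffreys P Q).
Proof.
  intro He; exists (two 1 0), (two (1 - eps) eps).
  split; [apply is_prob_two; lra|]; split; [apply is_prob_two; lra|].
  rewrite dTV_two, Jeffreys_two_PInf by lra; split; [|exact I].
  replace (1 - (1 - eps)) with eps by ring; replace (0 - eps) with (- eps) by ring.
  rewrite Rabs_Ropp, Rabs_right by lra; f_equal; field.
Qed.

Lemma Jeffreys_unbounded_KL eps M : 0 < eps ->
  exists P Q : nat -> R, is_prob P /\ is_prob Q /\ KL P Q = Fin eps /\
    ER_lt M (Jeffreys P Q).
Proof.
  intro He; set (x := 1 - exp (- eps)).
  pose proof (exp_opp_in_01 eps He) as Hexp.
  exists (two 1 0), (two (1 - x) x).
  split; [apply is_prob_two; lra|]; split; [apply is_prob_two; unfold x; lra|].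
  rewrite KL_two, Jeffreys_two_PInf by (unfold x; lra); split; [|exact I].
  unfold x; replace (1 - (1 - exp (- eps))) with (exp (- eps)) by ring.
  rewrite Rmult_0_l, Rplus_0_r, Rmult_1_l; unfold Rdiv; rewrite Rmult_1_l.
  now rewrite ln_Rinv, ln_exp, Ropp_involutive by apply exp_pos.
Qed.

Theorem proposition4 :
  (* (i) *)
  (forall eps : R, 0 <= eps < 1 ->
     (forall P Q : nat -> R, is_prob P -> is_prob Q -> dTV P Q = Fin eps ->
        ER_le (eps * ln ((1 + eps) / (1 - eps))) (Jeffreys P Q)) /\
     (is_prob (P_eps eps) /\ is_prob (Q_eps eps) /\
      dTV (P_eps eps) (Q_eps eps) = Fin eps /\
      Jeffreys (P_eps eps) (Q_eps eps) = Fin (eps * ln ((1 + eps) / (1 - eps))))) /\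
  (* (ii) *)
  (forall eps : R, 0 < eps ->
     (forall P Q : nat -> R, is_prob P -> is_prob Q -> KL P Q = Fin eps ->
        ER_le (eps / 2) (Jeffreys P Q)) /\
     (forall delta : R, 0 < delta ->
        exists P Q : nat -> R, is_prob P /\ is_prob Q /\ KL P Q = Fin eps /\
          exists j : R, Jeffreys P Q = Fin j /\ j < eps / 2 + delta)) /\
  (* (iii) *)
  (forall eps : R, 0 < eps < 1 -> forall M : R,
     exists P Q : nat -> R, is_prob P /\ is_prob Q /\ dTV P Q = Fin eps /\
       ER_lt M (Jeffreys P Q)) /\
  (forall eps : R, 0 < eps -> forall M : R,
     exists P Q : nat -> R, is_prob P /\ is_prob Q /\ KL P Q = Fin eps /\
       ER_lt M (Jeffreys P Q)).
Proof.
  split; [|split; [|split]].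
  - intros eps He; split; [intros; now apply Jeffreys_ge_dTV|].
    split; [apply is_prob_two; lra|]; split; [apply is_prob_two; lra|].
    split; [apply dTV_P_eps_Q_eps; lra|now apply Jeffreys_P_eps_Q_eps].
  - intros eps He; split; [intros; now apply Jeffreys_ge_half_KL|].
    intros; now apply Jeffreys_near_half_KL.
  - intros; now apply Jeffreys_unbounded_dTV.
  - intros; now apply Jeffreys_unbounded_KL.
Qed.
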